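(* Let $m\ge 2$, let $\mathbb{Z}_m$ be the cyclic group of order $m$ with generator $t$, and let $\Gamma$ be a group acting non-trivially on $\mathbb{Z}_m$ by automorphisms. Let $A$ be a $\mathbb{Z}_m\rtimes\Gamma$-module, put $W=\mathrm{Hom}_{\mathbb{Z}(\mathbb{Z}_m\rtimes\Gamma)}(\mathbb{Q}(\mathbb{Z}_m),A)$, and let $D^*,N^*:W\to W$ be induced by multiplication by $D=t+\dots+t^{m-1}-(m-1)$ and $N=1+t+\dots+t^{m-1}$ on $\mathbb{Q}(\mathbb{Z}_m)$. Then for every $n\ge1$ $${}_{\mathbb Q}H_\Gamma^{2n-1}(\mathbb{Z}_m,A)\cong \operatorname{Ker}N^*/\operatorname{Im}D^*,\qquad {}_{\mathbb Q}H_\Gamma^{2n}(\mathbb{Z}_m,A)\cong \operatorname{Ker}D^*/\operatorname{Im}N^*.$$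
   Context: For a $\Gamma$-group $G$, a $G\rtimes\Gamma$-module is an abelian group with $G$- and $\Gamma$-actions satisfying ${}^{\sigma}({}^{g}a)={}^{{}^{\sigma}g}({}^{\sigma}a)$. Let $B_*\to\mathbb{Z}$ be the bar resolution of $G$ ($B_0=\mathbb Z(G)$, $B_n$ free $\mathbb{Z}(G)$-module on symbols $[g_1,\dots,g_n]$) with $\Gamma$ acting by ${}^{\gamma}(g[g_1,\dots,g_n])={}^{\gamma}g[{}^{\gamma}g_1,\dots,{}^{\gamma}g_n]$, and $\Gamma$ acting trivially on $\mathbb{Q}$. The rational $\Gamma$-equivariant cohomology ${}_{\mathbb Q}H^n_\Gamma(G,A)$ is the $n$-th cohomology of the cochain complex $\mathrm{Hom}_{\mathbb{Z}(G\rtimes\Gamma)}(B_*\otimes\mathbb{Q},A)$. *)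

From HB Require Import structures.
From mathcomp Require Import all_boot all_order all_algebra.
Set Implicit Arguments. Unset Strict Implicit. Unset Printing Implicit Defensive.
Import GRing.Theory.
Local Open Scope ring_scope.

Definition is_group_action (Gam : groupType) (X : Type) (act : Gam -> X -> X) :=
  (forall x, act 1%g x = x) /\ (forall s t x, act (s * t)%g x = act s (act t x)).

Definition additive_map (U V : zmodType) (f : U -> V) :=
  forall x y, f (x + y) = f x + f y.

Definition acts_by_automorphisms (Gam : groupType) (m : nat)
  (actZ : Gam -> 'Z_m -> 'Z_m) :=
  is_group_action actZ /\ (forall s, additive_map (actZ s)).

Definition generates (m : nat) (t : 'Z_m) := forall g : 'Z_m, exists i : nat, g = t *+ i.

(* A is a Z_m ⋊ Gam-module: abelian group with Z_m- and Gam-actions (by additive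
   maps) satisfying  s(g a) = (s g)(s a). *)
Definition semidirect_module (Gam : groupType) (m : nat) (A : zmodType)
  (actZ : Gam -> 'Z_m -> 'Z_m) (actG : 'Z_m -> A -> A) (actA : Gam -> A -> A) :=
  [/\ (forall a, actG 0 a = a),
      (forall g h a, actG (g + h) a = actG g (actG h a)),
      (forall g, additive_map (actG g)),
      is_group_action actA /\ (forall s, additive_map (actA s)) &
      (forall s g a, actA s (actG g a) = actG (actZ s g) (actA s a))].

(* Isomorphism of subquotients  Z_X/B_X ≅ Z_Y/B_Y  of abelian groups (given by
   their addition/subtraction): an additive map f on Z_X with values in Z_Y
   inducing a well defined, injective and surjective map on the quotients. *)
Definition subquot_iso (X Y : Type) (addX : X -> X -> X) (addY subY : Y -> Y -> Y)
  (ZX BX : X -> Prop) (ZY BY : Y -> Prop) : Prop :=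
  exists f : X -> Y,
    [/\ (forall x, ZX x -> ZY (f x)),
        (forall x y, ZX x -> ZX y -> f (addX x y) = addY (f x) (f y)),
        (forall x, ZX x -> (BY (f x) <-> BX x)) &
        (forall y, ZY y -> exists x, ZX x /\ BY (subY y (f x)))].

Section Cohomology.
Variables (Gam : groupType) (m : nat) (A : zmodType).
Variables (actZ : Gam -> 'Z_m -> 'Z_m) (actG : 'Z_m -> A -> A) (actA : Gam -> A -> A).

(* Q-vector space with basis the symbols g[g_1,...,g_n] *)
Definition Bar (n : nat) := {ffun 'Z_m * {ffun 'I_n -> 'Z_m} -> rat}.

Definition bas (n : nat) (p : 'Z_m * {ffun 'I_n -> 'Z_m}) : Bar n :=
  [ffun q => (q == p)%:R].

Definition barG (n : nat) (h : 'Z_m) (x : Bar n) : Bar n :=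
  [ffun q => \sum_(p : 'Z_m * {ffun 'I_n -> 'Z_m}) x p * bas (h + p.1, p.2) q].

Definition barGam (n : nat) (s : Gam) (x : Bar n) : Bar n :=
  [ffun q => \sum_(p : 'Z_m * {ffun 'I_n -> 'Z_m}) x p * bas (actZ s p.1, [ffun i => actZ s (p.2 i)]) q].

(* face i of [g_1..g_{k+1}] (0-based list gs): i = 0 drops g_1, 1 <= i <= k merges
   g_i g_{i+1}, i = k+1 drops g_{k+1} *)
Definition face (k i : nat) (gs : {ffun 'I_k.+1 -> 'Z_m}) : {ffun 'I_k -> 'Z_m} :=
  [ffun j : 'I_k => if (j.+1 < i)%N then gs (inord j)
                    else if j.+1 == i then gs (inord j) + gs (inord j.+1)
                    else gs (inord j.+1)].

(* bar differential  d(g[g_1..g_{k+1}]) = g g_1[g_2..] + sum_{i=1}^k (-1)^i g[..,g_i g_{i+1},..]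
   + (-1)^{k+1} g[g_1..g_k], extended Q-linearly *)
Definition bd (k : nat) (x : Bar k.+1) : Bar k :=
  [ffun q => \sum_(p : 'Z_m * {ffun 'I_k.+1 -> 'Z_m}) x p *
     \sum_(i < k.+2) (-1) ^+ i *
        bas (if i == 0 :> nat then p.1 + p.2 (inord 0) else p.1, face i p.2) q].

Definition is_cochain (n : nat) (phi : Bar n -> A) :=
  [/\ additive_map phi,
      (forall h x, phi (barG h x) = actG h (phi x)) &
      (forall s x, phi (barGam s x) = actA s (phi x))].

Definition cochain_add (n : nat) (phi psi : Bar n -> A) : Bar n -> A :=
  fun x => phi x + psi x.

Definition is_cocycle (n : nat) (phi : Bar n -> A) :=
  is_cochain phi /\ (forall x : Bar n.+1, phi (bd x) = 0).

Definition is_coboundary (n : nat) : (Bar n -> A) -> Prop :=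
  match n return (Bar n -> A) -> Prop with
  | 0 => fun phi => forall x, phi x = 0
  | d.+1 => fun phi => exists psi : Bar d -> A, is_cochain psi /\ (forall x, phi x = psi (bd x))
  end.

Definition QZ := {ffun 'Z_m -> rat}.
Definition basQ (g : 'Z_m) : QZ := [ffun q => (q == g)%:R].
Definition trQ (h : 'Z_m) (x : QZ) : QZ := [ffun q => \sum_(g : 'Z_m) x g * basQ (h + g) q].
Definition gamQ (s : Gam) (x : QZ) : QZ := [ffun q => \sum_(g : 'Z_m) x g * basQ (actZ s g) q].

Definition is_W (w : QZ -> A) :=
  [/\ additive_map w,
      (forall h x, w (trQ h x) = actG h (w x)) &
      (forall s x, w (gamQ s x) = actA s (w x))].

Definition W_add (v w : QZ -> A) : QZ -> A := fun x => v x + w x.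
Definition W_sub (v w : QZ -> A) : QZ -> A := fun x => v x - w x.

Definition mulD (t : 'Z_m) (x : QZ) : QZ :=
  \sum_(1 <= i < m) trQ (t *+ i) x - [ffun g => (m.-1)%:R * x g].
Definition mulN (t : 'Z_m) (x : QZ) : QZ := \sum_(0 <= i < m) trQ (t *+ i) x.

Definition KerN (t : 'Z_m) (w : QZ -> A) := is_W w /\ (forall x, w (mulN t x) = 0).
Definition KerD (t : 'Z_m) (w : QZ -> A) := is_W w /\ (forall x, w (mulD t x) = 0).
Definition ImD (t : 'Z_m) (w : QZ -> A) :=
  exists v, is_W v /\ (forall x, w x = v (mulD t x)).
Definition ImN (t : 'Z_m) (w : QZ -> A) :=
  exists v, is_W v /\ (forall x, w x = v (mulN t x)).

End Cohomology.

From HB Require Import structures.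
From mathcomp Require Import all_boot all_order all_algebra.
From mathcomp Require Import ring.
From Stdlib Require Import FunctionalExtensionality.
Set Implicit Arguments. Unset Strict Implicit. Unset Printing Implicit Defensive.
Import GRing.Theory.
Local Open Scope ring_scope.

(* Both subquotients in the theorem are trivial, so the zero map is an
   isomorphism between them.

   1. Every operator of the rationalised bar complex (the actions of Z_m and
      of Gam, the differential) is the Q-linear extension [linext] of its
      value on basis symbols; we develop the calculus of such extensions.
   2. The bar resolution has the Gam-equivariant contracting homotopy
      [cone] : g[g_1|...|g_n] |-> 1[g|g_1|...|g_n], i.e. bd o cone + cone o bd
      is the identity in positive degrees ([bar_homotopy]).
   3. Averaging a cocycle phi o cone over Z_m, divided by m, gives an
      equivariant primitive: rational cohomology of Z_m vanishes in positive
      degrees ([cocycle_is_coboundary]).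
   4. On W, N - D is multiplication by m, invertible over Q; hence
      Ker N^* = Im D^* and Ker D^* = Im N^* ([mulD_mulN]).
   5. Two subquotients in which every cycle is a boundary are isomorphic via
      the zero map ([subquot_iso_trivial]); the theorem follows. *)

Definition delta (T : finType) (p : T) : {ffun T -> rat} := [ffun q => (q == p)%:R].

Definition scale (T : finType) (c : rat) (x : {ffun T -> rat}) : {ffun T -> rat} :=
  [ffun q => c * x q].

Definition linext (P Q : finType) (K : P -> {ffun Q -> rat}) (x : {ffun P -> rat})
  : {ffun Q -> rat} := [ffun q => \sum_p x p * K p q].

Section Scaling.
Variable T : finType.
Implicit Types x y : {ffun T -> rat}.

Lemma scaleD c x y : scale c (x + y) = scale c x + scale c y.
Proof. by apply/ffunP => q; rewrite !ffunE mulrDr. Qed.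

Lemma scaleB c x y : scale c (x - y) = scale c x - scale c y.
Proof. by apply/ffunP => q; rewrite !ffunE mulrBr. Qed.

Lemma scale_sum c I (r : seq I) (F : I -> {ffun T -> rat}) :
  scale c (\sum_(i <- r) F i) = \sum_(i <- r) scale c (F i).
Proof.
have scale0 : scale c (0 : {ffun T -> rat}) = 0 by apply/ffunP => q; rewrite !ffunE mulr0.
exact: (big_morph _ (scaleD c) scale0).
Qed.

Lemma scaleA a b x : scale a (scale b x) = scale (a * b) x.
Proof. by apply/ffunP => q; rewrite !ffunE mulrA. Qed.

Lemma scale1 x : scale 1 x = x.
Proof. by apply/ffunP => q; rewrite !ffunE mul1r. Qed.

Lemma scale_invK (m : nat) x : (0 < m)%N -> scale (m%:R)^-1 x *+ m = x.
Proof.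
move=> m_gt0; apply/ffunP => q; rewrite ffunMnE ffunE -mulrnAl -mulr_natr.
by rewrite mulVf ?mul1r // Num.Theory.pnatr_eq0 -lt0n.
Qed.

End Scaling.

Section LinearExtension.
Variables P Q : finType.
Implicit Types (K : P -> {ffun Q -> rat}) (x y : {ffun P -> rat}).

Lemma linextD K x y : linext K (x + y) = linext K x + linext K y.
Proof.
apply/ffunP => q; rewrite !ffunE -big_split /=; apply: eq_bigr => p _.
by rewrite ffunE mulrDl.
Qed.

Lemma linext_sum K I (r : seq I) (F : I -> {ffun P -> rat}) :
  linext K (\sum_(i <- r) F i) = \sum_(i <- r) linext K (F i).
Proof.
have linext0 : linext K 0 = 0.
  by apply/ffunP => q; rewrite !ffunE big1 // => p _; rewrite ffunE mul0r.
exact: (big_morph _ (linextD K) linext0).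
Qed.

Lemma linextZ K c x : linext K (scale c x) = scale c (linext K x).
Proof.
apply/ffunP => q; rewrite !ffunE mulr_sumr; apply: eq_bigr => p _.
by rewrite ffunE mulrA.
Qed.

Lemma linext_delta K p : linext K (delta p) = K p.
Proof.
apply/ffunP => q; rewrite ffunE (bigD1 p) //= big1 ?addr0.
  by rewrite ffunE eqxx mul1r.
by move=> p' /negbTE; rewrite ffunE => ->; rewrite mul0r.
Qed.

Lemma eq_linext K1 K2 x : (forall p, K1 p = K2 p) -> linext K1 x = linext K2 x.
Proof. by move=> eK; apply/ffunP => q; rewrite !ffunE; apply: eq_bigr => p _; rewrite eK. Qed.

Lemma linext_id x : linext (@delta P) x = x.
Proof.
apply/ffunP => q; rewrite ffunE (bigD1 q) //= big1 ?addr0.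
  by rewrite ffunE eqxx mulr1.
by move=> p' /negbTE; rewrite ffunE eq_sym => ->; rewrite mulr0.
Qed.

Lemma linext_addK K1 K2 x :
  linext (fun p => K1 p + K2 p) x = linext K1 x + linext K2 x.
Proof.
apply/ffunP => q; rewrite !ffunE -big_split /=; apply: eq_bigr => p _.
by rewrite ffunE mulrDr.
Qed.

End LinearExtension.

Lemma linext_comp (P Q R : finType) (K1 : P -> {ffun Q -> rat})
    (K2 : Q -> {ffun R -> rat}) x :
  linext K2 (linext K1 x) = linext (fun p => linext K2 (K1 p)) x.
Proof.
apply/ffunP => r; rewrite !ffunE.
under eq_bigr do rewrite ffunE mulr_suml.
rewrite exchange_big /=; apply: eq_bigr => p _; rewrite ffunE mulr_sumr.
by apply: eq_bigr => q _; rewrite mulrA.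
Qed.

Section AdditiveMaps.
Variables (U V : zmodType) (f : U -> V).
Hypothesis f_add : additive_map f.

Lemma additive0 : f 0 = 0.
Proof. by apply/eqP; rewrite -(subrr (f 0)) -{2}(addr0 0) f_add addrK. Qed.

Lemma additive_sum I (r : seq I) (F : I -> U) :
  f (\sum_(i <- r) F i) = \sum_(i <- r) f (F i).
Proof. exact: (big_morph _ f_add additive0). Qed.

Lemma additiveN x : f (- x) = - f x.
Proof. by apply/eqP; rewrite -subr_eq0 opprK -f_add addNr additive0. Qed.

Lemma additiveMn x n : f (x *+ n) = f x *+ n.
Proof. by elim: n => [|n IH]; rewrite ?mulr0n ?additive0 // !mulrS f_add IH. Qed.

End AdditiveMaps.

Section BarSymbols.
Variable m : nat.

Definition fcons k (g : 'Z_m) (gs : {ffun 'I_k -> 'Z_m}) : {ffun 'I_k.+1 -> 'Z_m} :=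
  [ffun j => if unlift ord0 j is Some j' then gs j' else g].

Lemma fcons0 k g (gs : {ffun 'I_k -> 'Z_m}) : fcons g gs ord0 = g.
Proof. by rewrite ffunE unlift_none. Qed.

Lemma fcons_lift k g (gs : {ffun 'I_k -> 'Z_m}) j : fcons g gs (lift ord0 j) = gs j.
Proof. by rewrite ffunE liftK. Qed.

Lemma fcons_inord d g (gs : {ffun 'I_d.+1 -> 'Z_m}) n : (n <= d.+1)%N ->
  fcons g gs (inord n) = if n is n'.+1 then gs (inord n') else g.
Proof.
case: n => [|n] le_n_d; rewrite ffunE.
  by rewrite (_ : inord 0 = ord0) ?unlift_none //; apply/val_inj; rewrite /= inordK.
rewrite (_ : inord n.+1 = lift ord0 (inord n : 'I_d.+1)) ?liftK //.
by apply/val_inj; rewrite /= /bump /= !inordK.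
Qed.

Lemma bump0 j : bump 0 j = j.+1.
Proof. by rewrite /bump add1n. Qed.

Lemma face0_fcons d g (gs : {ffun 'I_d.+1 -> 'Z_m}) : face 0 (fcons g gs) = gs.
Proof. by apply/ffunP => j; rewrite ffunE /= fcons_inord ?inord_val. Qed.

Lemma face1_fcons d g (gs : {ffun 'I_d.+1 -> 'Z_m}) :
  face 1 (fcons g gs) = fcons (g + gs (inord 0)) (face 0 gs).
Proof.
apply/ffunP => j; case: (unliftP ord0 j) => [j'|] ->;
  rewrite ?fcons0 ?fcons_lift.
  rewrite [LHS]ffunE [RHS]ffunE /= bump0 fcons_inord //.
  by rewrite ltnS ltn_ord.
by rewrite ffunE /= !fcons_inord.
Qed.

Lemma faceS_fcons d g (gs : {ffun 'I_d.+1 -> 'Z_m}) i : (0 < i)%N ->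
  face i.+1 (fcons g gs) = fcons g (face i gs).
Proof.
move=> i_gt0; apply/ffunP => j; case: (unliftP ord0 j) => [j'|] ->;
  rewrite ?fcons0 ?fcons_lift.
  rewrite ffunE [RHS]ffunE /= bump0 !ltnS !eqSS.
  have lt_j'_d : (j' < d)%N := ltn_ord j'.
  by rewrite !fcons_inord //; apply: leq_trans lt_j'_d _.
by rewrite ffunE /= ltnS i_gt0 fcons_inord.
Qed.

End BarSymbols.

Section ContractingHomotopy.
Variable m : nat.

(* The contracting homotopy g[g_1|...|g_k] |-> 1[g|g_1|...|g_k]. *)
Definition cone k (x : Bar m k) : Bar m k.+1 :=
  linext (fun p => bas (0, fcons p.1 p.2)) x.

Definition bd_symbol k (p : 'Z_m * {ffun 'I_k.+1 -> 'Z_m}) : Bar m k :=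
  \sum_(i < k.+2) scale ((-1) ^+ i)
     (bas (if i == 0 :> nat then p.1 + p.2 (inord 0) else p.1, face i p.2)).

Lemma bdE k (x : Bar m k.+1) : bd x = linext (@bd_symbol k) x.
Proof.
apply/ffunP => q; rewrite !ffunE; apply: eq_bigr => p _; congr (_ * _).
by rewrite sum_ffunE; apply: eq_bigr => i _; rewrite [in RHS]ffunE.
Qed.

(* The homotopy identity on a basis symbol: bd (cone b) + cone (bd b) = b,
   since all terms except the zeroth face of 1[g|gs] cancel in pairs. *)
Lemma bar_homotopy_symbol d (g : 'Z_m) (gs : {ffun 'I_d.+1 -> 'Z_m}) :
  bd_symbol (0, fcons g gs) +
  \sum_(i < d.+2) scale ((-1) ^+ i)
     (bas (0, fcons (if i == 0 :> nat then g + gs (inord 0) else g) (face i gs)))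
  = bas (g, gs).
Proof.
rewrite /bd_symbol big_ord_recl big_ord_recl [X in _ + X = _]big_ord_recl /=.
rewrite face0_fcons face1_fcons bump0 add0r fcons_inord //.
under eq_bigr => i _ do rewrite !bump0 faceS_fcons //.
under [X in _ + (_ + X) = _]eq_bigr => i _ do rewrite !bump0.
set B := bas (0, _); set b := bas (g, gs).
set S1 := \sum_(i < d.+1) _; set S2 := \sum_(i < d.+1) _.
have -> : S1 = - S2.
  rewrite /S1 /S2 -sumrN; apply: eq_bigr => i _; apply/ffunP => q.
  by rewrite !ffunE exprS mulN1r mulNr.
rewrite expr1 expr0 !scale1.
have -> : scale (-1) B = - B by apply/ffunP => q; rewrite !ffunE mulN1r.
by rewrite -opprD addrNK.
Qed.

Lemma bar_homotopy d (x : Bar m d.+1) : bd (cone x) + cone (bd x) = x.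
Proof.
rewrite !bdE /cone !linext_comp -[RHS]linext_id -linext_addK.
apply: eq_linext => -[g gs]; rewrite linext_delta /bd_symbol linext_sum /=.
rewrite -[RHS](bar_homotopy_symbol g gs); congr (_ + _).
by apply: eq_bigr => i _; rewrite linextZ linext_delta.
Qed.

End ContractingHomotopy.

Section Equivariance.
Variables (Gam : groupType) (m : nat) (actZ : Gam -> 'Z_m -> 'Z_m).
Hypothesis actZ_aut : acts_by_automorphisms actZ.

Lemma barGE n h (x : Bar m n) : barG h x = linext (fun p => bas (h + p.1, p.2)) x.
Proof. by []. Qed.

Lemma barGamE n s (x : Bar m n) :
  barGam actZ s x = linext (fun p : 'Z_m * {ffun 'I_n -> 'Z_m} =>
                      bas (actZ s p.1, [ffun i => actZ s (p.2 i)])) x.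
Proof. by []. Qed.

Lemma barG_scale n h c (x : Bar m n) : barG h (scale c x) = scale c (barG h x).
Proof. exact: linextZ. Qed.

Lemma barGam_scale n s c (x : Bar m n) :
  barGam actZ s (scale c x) = scale c (barGam actZ s x).
Proof. exact: linextZ. Qed.

Lemma bd_scale k c (x : Bar m k.+1) : bd (scale c x) = scale c (bd x).
Proof. by rewrite !bdE linextZ. Qed.

Lemma barG_bd k h (x : Bar m k.+1) : barG h (bd x) = bd (barG h x).
Proof.
rewrite !barGE !bdE !linext_comp; apply: eq_linext => p.
rewrite linext_delta /bd_symbol linext_sum; apply: eq_bigr => i _.
by rewrite linextZ linext_delta /=; case: ifP => _ //; rewrite addrA.
Qed.

Lemma barG_comp n a b (x : Bar m n) : barG a (barG b x) = barG (a + b) x.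
Proof.
by rewrite !barGE linext_comp; apply: eq_linext => p; rewrite linext_delta /= addrA.
Qed.

(* The homotopy is Gam-equivariant (but not Z_m-equivariant). *)
Lemma barGam_cone n s (x : Bar m n) :
  barGam actZ s (cone x) = cone (barGam actZ s x).
Proof.
rewrite !barGamE /cone !linext_comp; apply: eq_linext => p; rewrite !linext_delta /=.
have -> : [ffun i => actZ s (fcons p.1 p.2 i)] =
          fcons (actZ s p.1) [ffun i => actZ s (p.2 i)].
  by apply/ffunP => j; rewrite !ffunE; case: (unlift ord0 j) => [j'|] //; rewrite ffunE.
by rewrite (additive0 (actZ_aut.2 s)).
Qed.

Lemma barG_barGam n s b (x : Bar m n) :
  barG (actZ s b) (barGam actZ s x) = barGam actZ s (barG b x).
Proof.
rewrite !barGamE barGE !linext_comp; apply: eq_linext => p; rewrite !linext_delta /=.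
by rewrite actZ_aut.2.
Qed.

Lemma actZK s : cancel (actZ s) (actZ s^-1).
Proof. by move=> g; rewrite -(actZ_aut.1.2) mulVg actZ_aut.1.1. Qed.

End Equivariance.

Section RationalCohomologyVanishes.
Variables (Gam : groupType) (m : nat) (A : zmodType).
Variables (actZ : Gam -> 'Z_m -> 'Z_m) (actG : 'Z_m -> A -> A) (actA : Gam -> A -> A).
Hypotheses (m_gt1 : (1 < m)%N) (actZ_aut : acts_by_automorphisms actZ)
  (A_mod : semidirect_module actZ actG actA).

Lemma cocycle_cone d (phi : Bar m d.+1 -> A) (w : Bar m d.+1) :
  is_cocycle actZ actG actA phi -> phi (cone (bd w)) = phi w.
Proof.
case=> [[phi_add _ _] phi_cocycle].
by rewrite -{2}(bar_homotopy w) phi_add phi_cocycle add0r.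
Qed.

Definition average_cone d (phi : Bar m d.+1 -> A) (y : Bar m d) : A :=
  \sum_(h : 'Z_m) actG h (phi (cone (barG (- h) (scale (m%:R)^-1 y)))).

(* Averaging over Z_m restores the Z_m-equivariance lost by cone; Gam-
   equivariance survives because cone is Gam-equivariant. *)
Lemma average_cone_cochain d (phi : Bar m d.+1 -> A) :
  is_cocycle actZ actG actA phi -> is_cochain actZ actG actA (average_cone phi).
Proof.
case: A_mod => _ actGM actG_add [_ actA_add] act_comm.
move=> [[phi_add phi_G phi_Gam] _]; split.
- move=> x y; rewrite /average_cone -big_split /=; apply: eq_bigr => h _.
  by rewrite scaleD !barGE linextD -!barGE /cone linextD phi_add actG_add.
- move=> g x; rewrite /average_cone (additive_sum (actG_add g)).
  rewrite (reindex_inj (addrI g)) /=; apply: eq_bigr => h _.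
  rewrite -actGM barG_scale barG_comp -barG_scale.
  by rewrite opprD addrAC addNr add0r.
- move=> s x; rewrite /average_cone (additive_sum (actA_add s)).
  rewrite (reindex_inj (can_inj (actZK actZ_aut s))) /=; apply: eq_bigr => h _.
  rewrite -(barGam_scale actZ) -(additiveN (actZ_aut.2 s)) (barG_barGam actZ_aut).
  by rewrite -(barGam_cone actZ_aut) phi_Gam -act_comm.
Qed.

(* The average is a primitive: each of the m summands contributes phi x / m. *)
Lemma average_cone_bd d (phi : Bar m d.+1 -> A) (x : Bar m d.+1) :
  is_cocycle actZ actG actA phi -> average_cone phi (bd x) = phi x.
Proof.
case: A_mod => actG0 actGM _ _ _ => phi_cocycle.
have [[phi_add phi_G _] _] := phi_cocycle.
rewrite /average_cone.
under eq_bigr => h _.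
  rewrite -bd_scale barG_bd cocycle_cone // phi_G -actGM subrr actG0.
over.
have card_Zm : #|'Z_m| = m by rewrite card_ord Zp_cast.
by rewrite sumr_const card_Zm -(additiveMn phi_add) scale_invK // ltnW.
Qed.

Lemma cocycle_is_coboundary d (phi : Bar m d.+1 -> A) :
  is_cocycle actZ actG actA phi -> is_coboundary actZ actG actA phi.
Proof.
move=> phi_cocycle; exists (average_cone phi); split.
  exact: average_cone_cochain.
by move=> x; rewrite average_cone_bd.
Qed.

End RationalCohomologyVanishes.

(* An isomorphism between two subquotients in which every cycle is a
   boundary: the constant map to a neutral cycle y0. *)
Lemma subquot_iso_trivial (X Y : Type) (addX : X -> X -> X) (addY subY : Y -> Y -> Y)
    (ZX BX : X -> Prop) (ZY BY : Y -> Prop) (y0 : Y) :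
  ZY y0 -> BY y0 -> addY y0 y0 = y0 ->
  (forall x, ZX x -> BX x) -> (exists x0, ZX x0) ->
  (forall y, ZY y -> BY (subY y y0)) ->
  subquot_iso addX addY subY ZX BX ZY BY.
Proof.
move=> ZY0 BY0 add00 ZX_BX [x0 ZX0] ZY_BY; exists (fun _ => y0); split => //.
- by move=> x ZXx; split => // _; apply: ZX_BX.
- by move=> y ZYy; exists x0; split => //; apply: ZY_BY.
Qed.

Section WSide.
Variables (m : nat) (Gam : groupType) (A : zmodType) (t : 'Z_m).
Variables (actZ : Gam -> 'Z_m -> 'Z_m) (actG : 'Z_m -> A -> A) (actA : Gam -> A -> A).
Hypotheses (m_gt1 : (1 < m)%N) (A_mod : semidirect_module actZ actG actA).

Lemma natr_m_neq0 : (m%:R : rat) != 0.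
Proof. by rewrite Num.Theory.pnatr_eq0 -lt0n ltnW. Qed.

Lemma trQ_scale h (x : QZ m) c : trQ h (scale c x) = scale c (trQ h x).
Proof. exact: linextZ. Qed.

Lemma gamQ_scale s (x : QZ m) c : gamQ actZ s (scale c x) = scale c (gamQ actZ s x).
Proof. exact: linextZ. Qed.

Lemma mulN_scale (x : QZ m) c : mulN t (scale c x) = scale c (mulN t x).
Proof. by rewrite /mulN scale_sum; apply: eq_bigr => i _; rewrite trQ_scale. Qed.

Lemma mulD_mulN (x : QZ m) : mulD t x = mulN t x - scale (m%:R) x.
Proof.
rewrite /mulD /mulN (big_ltn (ltnW m_gt1)) mulr0n.
have -> : trQ 0 x = x.
  by rewrite -[RHS](linext_id x); apply: eq_linext => g; rewrite add0r.
have m_pred : (m%:R : rat) = (m.-1)%:R + 1 by rewrite natr1 prednK // ltnW.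
by apply/ffunP => q; rewrite !ffunE m_pred; ring.
Qed.

Lemma is_W0 : is_W actZ actG actA (fun _ => 0).
Proof.
case: A_mod => _ _ actG_add [_ actA_add] _; split.
- by move=> x y; rewrite addr0.
- by move=> h x; rewrite (additive0 (actG_add h)).
- by move=> s x; rewrite (additive0 (actA_add s)).
Qed.

Lemma is_W_scale (w : QZ m -> A) c : is_W actZ actG actA w ->
  is_W actZ actG actA (fun x => w (scale c x)) /\
  is_W actZ actG actA (fun x => - w (scale c x)).
Proof.
case: A_mod => _ _ actG_add [_ actA_add] _.
case=> w_add w_G w_Gam; split; split.
- by move=> x y; rewrite scaleD w_add.
- by move=> h x; rewrite -trQ_scale w_G.
- by move=> s x; rewrite -gamQ_scale w_Gam.
- by move=> x y; rewrite scaleD w_add opprD.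
- by move=> h x; rewrite -trQ_scale w_G (additiveN (actG_add h)).
- by move=> s x; rewrite -gamQ_scale w_Gam (additiveN (actA_add s)).
Qed.

Lemma KerN_sub_ImD (w : QZ m -> A) :
  KerN actZ actG actA t w -> ImD actZ actG actA t (W_sub w (fun _ => 0)).
Proof.
move=> [wW wN]; exists (fun x => - w (scale (m%:R)^-1 x)).
split; first exact: (is_W_scale _ wW).2.
case: wW => w_add _ _ x.
rewrite /W_sub subr0 mulD_mulN scaleB -mulN_scale scaleA mulVf ?natr_m_neq0 //.
by rewrite scale1 w_add (additiveN w_add) wN sub0r opprK.
Qed.

Lemma KerD_sub_ImN (w : QZ m -> A) :
  KerD actZ actG actA t w -> ImN actZ actG actA t (W_sub w (fun _ => 0)).
Proof.
move=> [wW wD]; exists (fun x => w (scale (m%:R)^-1 x)).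
split; first exact: (is_W_scale _ wW).1.
case: wW => w_add _ _ x; rewrite /W_sub subr0 -mulN_scale.
have -> : mulN t (scale (m%:R)^-1 x) = mulD t (scale (m%:R)^-1 x) + x.
  by rewrite mulD_mulN scaleA mulfV ?natr_m_neq0 // scale1 subrK.
by rewrite w_add wD add0r.
Qed.

End WSide.

Section Subquotients.
Variables (m : nat) (Gam : groupType) (A : zmodType).
Variables (actZ : Gam -> 'Z_m -> 'Z_m) (actG : 'Z_m -> A -> A) (actA : Gam -> A -> A).
Hypotheses (m_gt1 : (1 < m)%N) (actZ_aut : acts_by_automorphisms actZ)
  (A_mod : semidirect_module actZ actG actA).

Lemma zero_cocycle k : is_cocycle actZ actG actA (n := k) (fun _ => 0).
Proof.
case: A_mod => _ _ actG_add [_ actA_add] _; split=> //; split.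
- by move=> x y; rewrite addr0.
- by move=> h x; rewrite (additive0 (actG_add h)).
- by move=> s x; rewrite (additive0 (actA_add s)).
Qed.

Lemma W_add0 : W_add (fun _ : QZ m => 0 : A) (fun _ => 0) = (fun _ => 0).
Proof. by apply: functional_extensionality => x; rewrite /W_add addr0. Qed.

Lemma cohomology_iso_trivial k (ZY BY : (QZ m -> A) -> Prop) :
  (0 < k)%N -> ZY (fun _ => 0) -> BY (fun _ => 0) ->
  (forall w, ZY w -> BY (W_sub w (fun _ => 0))) ->
  subquot_iso (@cochain_add _ _ k) (@W_add m A) (@W_sub m A)
    (is_cocycle actZ actG actA (n := k)) (is_coboundary actZ actG actA (n := k)) ZY BY.
Proof.
case: k => // d _ ZY0 BY0 ZY_BY; apply: subquot_iso_trivial ZY0 BY0 W_add0 _ _ ZY_BY.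
- exact: cocycle_is_coboundary.
- by exists (fun _ => 0); apply: zero_cocycle.
Qed.

End Subquotients.

Unset Implicit Arguments.
Set Strict Implicit.

Theorem theorem4p4 (m : nat) (Gam : groupType) (A : zmodType) (t : 'Z_m)
    (actZ : Gam -> 'Z_m -> 'Z_m) (actG : 'Z_m -> A -> A) (actA : Gam -> A -> A) :
  (1 < m)%N ->
  generates t ->
  acts_by_automorphisms actZ ->
  (exists (s : Gam) (g : 'Z_m), actZ s g != g) ->
  semidirect_module actZ actG actA ->
  forall n : nat, (0 < n)%N ->
    subquot_iso (@cochain_add _ _ (2 * n - 1)) (@W_add m A) (@W_sub m A)
      (is_cocycle actZ actG actA (n := 2 * n - 1)) (is_coboundary actZ actG actA (n := 2 * n - 1))
      (KerN actZ actG actA t) (ImD actZ actG actA t)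
    /\
    subquot_iso (@cochain_add _ _ (2 * n)) (@W_add m A) (@W_sub m A)
      (is_cocycle actZ actG actA (n := 2 * n)) (is_coboundary actZ actG actA (n := 2 * n))
      (KerD actZ actG actA t) (ImN actZ actG actA t).
Proof.
move=> m_gt1 _ actZ_aut _ A_mod n n_gt0.
have W0 := is_W0 A_mod.
have ImD0 : ImD actZ actG actA t (fun _ => 0) by exists (fun _ => 0).
have ImN0 : ImN actZ actG actA t (fun _ => 0) by exists (fun _ => 0).
split; apply: cohomology_iso_trivial => //.
- by case: n n_gt0 => // n _; rewrite mulnS addSn subn1.
- exact: KerN_sub_ImD.
- by rewrite muln_gt0.
- exact: KerD_sub_ImN.
Qed.
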